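(* (i) For integers $p\geq 0$, $s,t\geq 1$ and $\max\{s+p+2,\,t+p+2\}\leq n\leq s+t+p+1$, the graph $M_{n,n-1}^{s,t}$ is not $2p$-Hamilton-biconnected. (ii) For integers $p\geq 0$, $s,t\geq 1$ and $n=s+t+p$, the graph $M_{n,n}^{s,t}$ is not $2p$-Hamilton-biconnected. (iii) For integers $p\geq 0$ and $n\geq p+6$, the graph $N_{n,n}^{p,1}$ is not $2p$-Hamilton-biconnected.
   Context: For a bipartite graph $G=(X,Y;E)$: if $|X|=|Y|$ (balanced), $G$ is Hamilton-biconnected if for every $u\in X$, $v\in Y$ there is a Hamiltonian path with ends $u,v$; if $|X|=|Y|+1$ (nearly balanced), $G$ is Hamilton-biconnected if for any two distinct $u,v\in X$ there is a Hamiltonian path with ends $u,v$. A vertex set $W$ is balanced if $|W\cap X|=|W\cap Y|$; $G$ is $2p$-Hamilton-biconnected if for every balanced $W$ with $|W|=2p$, the subgraph induced by $V(G)\setminus W$ is Hamilton-biconnected. $M_{n,m}^{s,t}$: parts $X=X_1\cup X_2$ (with $n$ vertices), $Y=Y_1\cup Y_2$ (with $m$ vertices), $|X_1|=s$, $|X_2|=n-s$, $|Y_1|=m-t$, $|Y_2|=t$; edges are all pairs between $X_1$ and $Y_1$, between $X_2$ and $Y_1$, and between $X_2$ and $Y_2$. $N_{n,n}^{p,1}$: parts $X=X_1\cup X_2\cup X_3$, $Y=Y_1\cup Y_2\cup Y_3$, $|X_1|=|Y_1|=n-p-2$, $|X_2|=|Y_2|=p+1$, $|X_3|=|Y_3|=1$;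 edges are all pairs between $X_i$ and $Y_i$ ($i=1,2,3$), between $X_1$ and $Y_2$, between $X_2$ and $Y_1\cup Y_3$, and between $X_3$ and $Y_2$. *)

From mathcomp Require Import all_boot.
Set Implicit Arguments. Unset Strict Implicit. Unset Printing Implicit Defensive.

(* A bipartite graph G = (X, Y; E) is given by finite types X, Y (the parts)
   and a boolean adjacency relation adj : X -> Y -> bool.
   The vertex set is the disjoint union X + Y. *)
Section Bip.
Variables (X Y : finType) (adj : X -> Y -> bool).

Definition bedge (a b : X + Y) : bool :=
  match a, b with
  | inl x, inr y => adj x y
  | inr y, inl x => adj x y
  | _, _ => false
  end.

Definition ham_path (S : {set X + Y}) (u v : X + Y) : Prop :=
  exists s : seq (X + Y),
    [/\ uniq (u :: s), (forall z, (z \in u :: s) = (z \in S)),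
        path bedge u s & last u s = v].

Definition partX (S : {set X + Y}) : {set X} := [set x | inl x \in S].
Definition partY (S : {set X + Y}) : {set Y} := [set y | inr y \in S].

Definition ham_biconnected (S : {set X + Y}) : Prop :=
  (#|partX S| = #|partY S| ->
     forall x y, x \in partX S -> y \in partY S -> ham_path S (inl x) (inr y)) /\
  (#|partX S| = #|partY S| + 1 ->
     forall x1 x2, x1 \in partX S -> x2 \in partX S -> x1 != x2 ->
       ham_path S (inl x1) (inl x2)).

Definition balanced (W : {set X + Y}) : bool := #|partX W| == #|partY W|.

Definition k_ham_biconnected (k : nat) : Prop :=
  forall W : {set X + Y}, balanced W -> #|W| = k -> ham_biconnected (~: W).

End Bip.

(* M_{n,m}^{s,t}: X = 'I_n with X1 = {x < s}, X2 = {s <= x};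
   Y = 'I_m with Y1 = {y < m - t}, Y2 = {m - t <= y}.
   Edges: X1-Y1, X2-Y1, X2-Y2. *)
Definition adjM (n m s t : nat) (x : 'I_n) (y : 'I_m) : bool :=
  let inX1 := x < s in let inY1 := y < m - t in
  [|| inX1 && inY1, (~~ inX1) && inY1 | (~~ inX1) && (~~ inY1)].

(* N_{n,n}^{p,1}: index i < n lies in part 1 if i < n-p-2 (size n-p-2),
   in part 2 if n-p-2 <= i < n-1 (size p+1), in part 3 if i = n-1 (size 1). *)
Definition partN (n p i : nat) : nat :=
  if i < n - p - 2 then 1 else if i < n - 1 then 2 else 3.

Definition adjN (n p : nat) (x y : 'I_n) : bool :=
  let a := partN n p x in let b := partN n p y in
  (a == b) || ((a, b) \in [:: (1, 2); (2, 1); (2, 3); (3, 2)]).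

Arguments adjM n m s t x y : clear implicits.
Arguments adjN n p x y : clear implicits.

From mathcomp Require Import all_boot.
From mathcomp Require Import zify.
Set Implicit Arguments. Unset Strict Implicit. Unset Printing Implicit Defensive.

(* Delete a balanced set W of 2p vertices and exhibit ends joined by no
   Hamiltonian path of G - W.
   For M, W consists of p vertices of X2 and p vertices of Y1.  As X1 is
   adjacent only to Y1, along a Hamiltonian path with both ends outside
   X1 ∪ Y1 every vertex of X1 lies on two edges into Y1, and one more edge
   enters X1 ∪ Y1 from outside; counting path edges at Y1 gives
   |X1| < |Y1 - W|, which the bounds on n exclude.
   For N, W is X2 ∪ Y2 minus the vertices x2, y2 indexed n - 2.  Then y3 is
   adjacent only to x2, x3 and x3 only to y2, y3, so a Hamiltonian path from
   x2 to y2 is forced to be x2 y3 x3 y2, which misses X1. *)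

Lemma uniq_last_head_nil (T : eqType) (x : T) (s : seq T) :
  uniq (x :: s) -> last x s = x -> s = [::].
Proof.
case: s => [//|y s] /= /andP[x_notin _] last_x.
by move: (mem_last y s); rewrite last_x (negbTE x_notin).
Qed.

Lemma path_deg2_start (T : eqType) (e : rel T) (x z b : T) (s : seq T) :
  symmetric e -> uniq (x :: s) -> path e x s -> z \in s -> z != last x s ->
  {in x :: s, forall y, e z y -> y = x \/ y = b} ->
  exists s', s = z :: b :: s'.
Proof.
move=> e_sym + + z_in; case/splitPr: z_in => s1 [|w s2]; first by rewrite last_cat eqxx.
rewrite -cat_cons cat_uniq cat_path /=.
move=> /and3P[s1_uniq disj _] /and3P[_ e_lz /andP[e_zw _]] _ nbr.
have w_out : w \notin x :: s1 by case/norP: disj => _ /norP[].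
have w_b : w = b.
  have w_in : w \in x :: s1 ++ [:: z, w & s2] by rewrite !(inE, mem_cat) eqxx !orbT.
  have [w_x|//] := nbr w w_in e_zw.
  by move: w_out; rewrite w_x mem_head.
have last_x : last x s1 = x.
  have last_in : last x s1 \in x :: s1 ++ [:: z, w & s2] by rewrite -cat_cons mem_cat mem_last.
  have [//|last_b] := nbr _ last_in (etrans (e_sym _ _) e_lz).
  by move: w_out; rewrite w_b -last_b mem_last.
by exists s2; rewrite (uniq_last_head_nil s1_uniq last_x) w_b.
Qed.

Lemma has_entering_edge (T : Type) (C : pred T) (x : T) (s : seq T) :
  ~~ C x -> has C s -> has (fun ab => ~~ C ab.1 && C ab.2) (zip (x :: s) s).
Proof.
elim: s x => [//|y s IH] x /= Cx /orP[Cy|Cs]; first by rewrite Cx Cy.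
case Cy: (C y); first by rewrite Cx.
by rewrite IH ?Cy ?orbT.
Qed.

(* Sum the edge inequality along the path: an inner vertex lies on two
   edges, an end on one. *)
Lemma path_count_discharge (T : Type) (e c : rel T) (A B : pred T) (x : T) (s : seq T) :
  (forall a b, e a b -> A a + A b + c a b <= B a + B b) -> path e x s ->
  2 * count A (x :: s) + B x + B (last x s) + count (fun ab => c ab.1 ab.2) (zip (x :: s) s)
    <= 2 * count B (x :: s) + A x + A (last x s).
Proof.
move=> weight; elim: s x => [|y s IH] x /=; first by case: (A x); case: (B x).
case/andP=> /weight xy /IH /= IHs; lia.
Qed.

Lemma path_count_lt (T : eqType) (e : rel T) (A B : pred T) (x : T) (s : seq T) :
  symmetric e -> (forall a b, A a -> e a b -> B b) ->
  ~~ (A x || B x) -> ~~ (A (last x s) || B (last x s)) -> 0 < count A (x :: s) ->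
  path e x s -> count A (x :: s) < count B (x :: s).
Proof.
move=> e_sym AB /norP[/negbTE Ax /negbTE Bx] /norP[/negbTE Al /negbTE Bl] A_gt0.
have A_s : has A s by rewrite -has_count /= Ax in A_gt0.
have entering :
    0 < count (fun ab => ~~ (A ab.1 || B ab.1) && (A ab.2 || B ab.2)) (zip (x :: s) s).
  rewrite -has_count; apply: (has_entering_edge (C := [pred z | A z || B z])).
    by rewrite /= Ax Bx.
  by apply: sub_has A_s => z /= ->.
have weight a b : e a b -> A a + A b + (~~ (A a || B a) && (A b || B b)) <= B a + B b.
{ move=> ab; have ba : e b a by rewrite e_sym.
  case Aa: (A a); first have -> := AB _ _ Aa ab.
  all: case Ab: (A b); first have -> := AB _ _ Ab ba.
  all: by case: (B a); case: (B b). }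
move=> /(path_count_discharge weight); rewrite Ax Bx Al Bl; lia.
Qed.

Lemma count_uniq_mem (T : finType) (r : seq T) (A B : {set T}) :
  uniq r -> r =i A -> count [in B] r = #|A :&: B|.
Proof.
move=> r_uniq r_A; rewrite -size_filter -(card_uniqP (filter_uniq _ r_uniq)).
by apply: eq_card => z; rewrite mem_filter r_A inE andbC.
Qed.

Lemma card_ord_lt n b : b <= n -> #|[set i : 'I_n | i < b]| = b.
Proof.
move=> bn; rewrite -[RHS]card_ord -cardsT.
have widen_inj : injective (widen_ord bn) by move=> i j /(congr1 val) ij; apply: val_inj.
rewrite -(card_imset _ widen_inj); apply: eq_card => i; rewrite inE.
apply/idP/imsetP => [ib | [j _ ->]]; last exact: (leq_trans (ltn_ord j)).
by exists (Ordinal ib); last exact: val_inj.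
Qed.
Lemma card_ord_interval n a b : a <= b <= n -> #|[set i : 'I_n | a <= i < b]| = b - a.
Proof.
case/andP=> ab bn.
have -> : [set i : 'I_n | a <= i < b] = [set i : 'I_n | i < b] :\: [set i : 'I_n | i < a].
  by apply/setP => i; rewrite !inE -leqNgt.
have sub_ab : [set i : 'I_n | i < a] \subset [set i : 'I_n | i < b].
  by apply/subsetP => i; rewrite !inE => /leq_trans; apply.
by rewrite cardsD (setIidPr sub_ab) !card_ord_lt // (leq_trans ab).
Qed.

Lemma card_ord_setC n (A : {set 'I_n}) : #|~: A| = n - #|A|.
Proof. by rewrite cardsCs setCK card_ord. Qed.

Section SumSet.
Variables (X Y : finType).

Definition sum_set (A : {set X}) (B : {set Y}) : {set X + Y} :=
  [set z | match z with inl x => x \in A | inr y => y \in B end].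

Lemma partX_sum_set A B : partX (sum_set A B) = A.
Proof. by apply/setP => x; rewrite !inE. Qed.

Lemma partY_sum_set A B : partY (sum_set A B) = B.
Proof. by apply/setP => y; rewrite !inE. Qed.

Lemma sum_set_part (S : {set X + Y}) : sum_set (partX S) (partY S) = S.
Proof. by apply/setP => -[x|y]; rewrite !inE. Qed.

Lemma setC_sum_set A B : ~: sum_set A B = sum_set (~: A) (~: B).
Proof. by apply/setP => -[x|y]; rewrite !inE. Qed.

Lemma setI_sum_set A B A' B' :
  sum_set A B :&: sum_set A' B' = sum_set (A :&: A') (B :&: B').
Proof. by apply/setP => -[x|y]; rewrite !inE. Qed.

Lemma card_sum_set A B : #|sum_set A B| = #|A| + #|B|.
Proof.
rewrite -!sum1_card big_sumType /=.
by congr (_ + _); apply: eq_bigl => z; rewrite inE.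
Qed.

End SumSet.

Section HamPath.
Variables (X Y : finType) (adj : X -> Y -> bool).

Lemma bedge_sym : symmetric (bedge adj).
Proof. by case=> [x|y] [x'|y']. Qed.

Lemma ham_biconnected_sum_setC p (A : {set X}) (B : {set Y}) :
  #|A| = p -> #|B| = p -> k_ham_biconnected adj (2 * p) ->
  ham_biconnected adj (sum_set (~: A) (~: B)).
Proof.
move=> A_p B_p /(_ (sum_set A B)); rewrite setC_sum_set; apply.
  by rewrite /balanced partX_sum_set partY_sum_set A_p B_p.
by rewrite card_sum_set A_p B_p mul2n addnn.
Qed.

Lemma ham_path_card_lt (S : {set X + Y}) (A : {set X}) (B : {set Y}) u v :
  (forall x y, x \in A -> adj x y -> y \in B) -> 0 < #|partX S :&: A| ->
  u \notin sum_set A B -> v \notin sum_set A B -> ham_path adj S u v ->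
  #|partX S :&: A| < #|partY S :&: B|.
Proof.
move=> AB A_gt0 u_out v_out [s [s_uniq s_mem s_path s_last]].
have cardA : count [in sum_set A set0] (u :: s) = #|partX S :&: A|.
  rewrite (count_uniq_mem _ s_uniq s_mem) -{1}(sum_set_part S).
  by rewrite setI_sum_set card_sum_set setI0 cards0 addn0.
have cardB : count [in sum_set set0 B] (u :: s) = #|partY S :&: B|.
  rewrite (count_uniq_mem _ s_uniq s_mem) -{1}(sum_set_part S).
  by rewrite setI_sum_set card_sum_set setI0 cards0.
have outside z : z \notin sum_set A B -> ~~ ((z \in sum_set A set0) || (z \in sum_set set0 B)).
  by case: z => [x|y]; rewrite !inE ?orbF.
rewrite -cardA -cardB; apply: (path_count_lt bedge_sym) s_path => //.
- by move=> [x|y] [x'|y'] //=; rewrite !inE //; apply: AB.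
- exact: outside u_out.
- by rewrite s_last; apply: outside v_out.
- by rewrite cardA.
Qed.

End HamPath.

Section MGraph.
Variables n m s t p : nat.

Local Notation X1 := [set x : 'I_n | x < s].
Local Notation Y1 := [set y : 'I_m | y < m - t].
Local Notation S := (sum_set (~: [set x : 'I_n | s <= x < s + p]) (~: [set y : 'I_m | y < p])).

Lemma adjM_X1 x y : x \in X1 -> adjM n m s t x y -> y \in Y1.
Proof. by rewrite !inE /adjM => ->; rewrite orbF. Qed.

Lemma M_ham_path_bound u v : 0 < s <= n -> p <= m - t ->
  u \notin sum_set X1 Y1 -> v \notin sum_set X1 Y1 -> ham_path (adjM n m s t) S u v ->
  s < m - t - p.
Proof.
case/andP=> s_gt0 sn pmt u_out v_out hp.
have := ham_path_card_lt adjM_X1 _ u_out v_out hp.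
have -> : partX S :&: X1 = X1.
  by rewrite partX_sum_set; apply/setIidPr/subsetP => x; rewrite !inE => xs; rewrite leqNgt xs.
have -> : partY S :&: Y1 = [set y : 'I_m | p <= y < m - t].
  by rewrite partY_sum_set; apply/setP => y; rewrite !inE -leqNgt.
by rewrite card_ord_lt // card_ord_interval ?pmt ?leq_subr // => /(_ s_gt0).
Qed.

End MGraph.

Lemma M_nearly_balanced_not_ham_biconnected p s t n :
  0 < s -> maxn (s + p + 2) (t + p + 2) <= n -> n <= s + t + p + 1 ->
  ~ k_ham_biconnected (adjM n (n - 1) s t) (2 * p).
Proof.
rewrite geq_max => s_gt0 /andP[sn tn] n_le hk.
have cardWX : #|[set x : 'I_n | s <= x < s + p]| = p by rewrite card_ord_interval; lia.
have cardWY : #|[set y : 'I_(n - 1) | y < p]| = p by rewrite card_ord_lt; lia.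
have [_ nearly] := ham_biconnected_sum_setC cardWX cardWY hk.
have x1_lt : s + p < n by lia.
have x2_lt : s + p + 1 < n by lia.
have x12 : Ordinal x1_lt != Ordinal x2_lt by rewrite -val_eqE /=; lia.
have card_eq : n - p = n - 1 - p + 1 by lia.
move: nearly; rewrite partX_sum_set partY_sum_set !card_ord_setC cardWX cardWY.
move=> /(_ card_eq (Ordinal x1_lt) (Ordinal x2_lt)) hp.
have := M_ham_path_bound _ _ _ _ (hp _ _ x12).
rewrite !inE /=; lia.
Qed.

Lemma M_balanced_not_ham_biconnected p s t n :
  0 < s -> 0 < t -> n = s + t + p -> ~ k_ham_biconnected (adjM n n s t) (2 * p).
Proof.
move=> s_gt0 t_gt0 n_eq hk.
have cardWX : #|[set x : 'I_n | s <= x < s + p]| = p by rewrite card_ord_interval; lia.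
have cardWY : #|[set y : 'I_n | y < p]| = p by rewrite card_ord_lt; lia.
have [balanced _] := ham_biconnected_sum_setC cardWX cardWY hk.
have x_lt : s + p < n by lia.
have y_lt : n - 1 < n by lia.
move: balanced; rewrite partX_sum_set partY_sum_set !card_ord_setC cardWX cardWY.
move=> /(_ erefl (Ordinal x_lt) (Ordinal y_lt)) hp.
have := M_ham_path_bound _ _ _ _ (hp _ _).
rewrite !inE /=; lia.
Qed.

Section NGraph.
Variables n p : nat.
Hypothesis n_ge : p + 6 <= n.

Local Notation I := [set i : 'I_n | n - p - 2 <= i < n - 2].
Local Notation S := (sum_set (~: I) (~: I)).

Let lt_n2 : n - 2 < n. Proof. lia. Qed.
Let lt_n1 : n - 1 < n. Proof. lia. Qed.
Let i2 : 'I_n := Ordinal lt_n2.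
Let i3 : 'I_n := Ordinal lt_n1.
Local Notation x2 := (@inl 'I_n 'I_n i2).
Local Notation x3 := (@inl 'I_n 'I_n i3).
Local Notation y2 := (@inr 'I_n 'I_n i2).
Local Notation y3 := (@inr 'I_n 'I_n i3).

Lemma adjN_i3 x : x \in ~: I -> adjN n p x i3 || adjN n p i3 x -> x = i2 \/ x = i3.
Proof.
rewrite !inE /adjN /partN /=.
have -> : (n - 1 < n - p - 2) = false by apply/negbTE; rewrite -leqNgt; lia.
rewrite ltnn; have := ltn_ord x.
case: ifP => // x_ge1; case: ifP => x_lt2 x_n x_I _; [left | right]; apply: val_inj => /=; lia.
Qed.

Lemma nbr_y3 : {in S, forall z, bedge (adjN n p) y3 z -> z = x2 \/ z = x3}.
Proof.
move=> [x|//]; rewrite inE => x_out adj.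
have x_nbr : adjN n p x i3 || adjN n p i3 x by apply/orP; left.
by have [->|->] := adjN_i3 x_out x_nbr; [left | right].
Qed.

Lemma nbr_x3 : {in S, forall z, bedge (adjN n p) x3 z -> z = y3 \/ z = y2}.
Proof.
move=> [//|y]; rewrite inE => y_out adj.
have y_nbr : adjN n p y i3 || adjN n p i3 y by apply/orP; right.
by have [->|->] := adjN_i3 y_out y_nbr; [right | left].
Qed.

Lemma N_no_ham_path : ~ ham_path (adjN n p) S x2 y2.
Proof.
case=> s [s_uniq s_mem s_path s_last].
have y3_in : y3 \in s by move: (s_mem y3); rewrite !inE /= => ->; lia.
have y3_last : y3 != last x2 s.
  by rewrite s_last; apply/eqP => -[]; lia.
have y3_nbr : {in x2 :: s, forall z, bedge (adjN n p) y3 z -> z = x2 \/ z = x3}.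
  by move=> z; rewrite s_mem; apply: nbr_y3.
have [s' ?] := path_deg2_start (bedge_sym _) s_uniq s_path y3_in y3_last y3_nbr; subst s.
have tail_uniq : uniq [:: y3, x3 & s'] by case/andP: s_uniq.
have tail_path : path (bedge (adjN n p)) y3 (x3 :: s') by case/andP: s_path.
have x3_last : x3 != last y3 (x3 :: s') by move: s_last => /= ->.
have x3_nbr : {in [:: y3, x3 & s'], forall z, bedge (adjN n p) x3 z -> z = y3 \/ z = y2}.
  by move=> z z_in; apply: nbr_x3; rewrite -s_mem inE z_in orbT.
have [s'' [?]] :=
  path_deg2_start (bedge_sym _) tail_uniq tail_path (mem_head _ _) x3_last x3_nbr.
subst s'.
have s''_nil : s'' = [::] by apply: uniq_last_head_nil; [case/and4P: s_uniq | exact: s_last].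
have := card_uniqP s_uniq.
by rewrite (eq_card s_mem) s''_nil card_sum_set !card_ord_setC card_ord_interval /=; lia.
Qed.

Lemma N_not_ham_biconnected : ~ k_ham_biconnected (adjN n p) (2 * p).
Proof.
move=> hk.
have cardI : #|I| = p by rewrite card_ord_interval; lia.
have [balanced _] := ham_biconnected_sum_setC cardI cardI hk.
apply: N_no_ham_path; apply: balanced; rewrite ?partX_sum_set ?partY_sum_set ?inE //=; lia.
Qed.

End NGraph.

Theorem lemma2p8 :
  (forall p s t n : nat, 1 <= s -> 1 <= t ->
     maxn (s + p + 2) (t + p + 2) <= n -> n <= s + t + p + 1 ->
     ~ k_ham_biconnected (adjM n (n - 1) s t) (2 * p)) /\
  (forall p s t n : nat, 1 <= s -> 1 <= t -> n = s + t + p ->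
     ~ k_ham_biconnected (adjM n n s t) (2 * p)) /\
  (forall p n : nat, p + 6 <= n ->
     ~ k_ham_biconnected (adjN n p) (2 * p)).
Proof.
split; [|split].
- by move=> p s t n s_gt0 _; apply: M_nearly_balanced_not_ham_biconnected.
- by move=> p s t n s_gt0 t_gt0; apply: M_balanced_not_ham_biconnected.
- by move=> p n; apply: N_not_ham_biconnected.
Qed.
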